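(* Let $(\mathbf A,G,H)$ be a tense Pavelka algebra whose underlying Pavelka algebra $\mathbf A$ is semisimple, and let $R\colon\mathrm{Spec_M}\mathbf A\times\mathrm{Spec_M}\mathbf A\to[0,1]$, $R(F,F')=\bigwedge_{a\in A}(G(a)/F'\rightarrow a/F)$, be its natural time frame relation. Then: (i) $R$ is reflexive if and only if $G(x)\le x$ for all $x\in A$ (equivalently, if and only if $H(x)\le x$ for all $x\in A$); (ii) $R$ is symmetric if and only if $H=G$; (iii) $R$ is transitive if and only if $G(x)\le G(G(x))$ for all $x\in A$ (equivalently, if and only if $H(x)\le H(H(x))$ for all $x\in A$).
   Context: An MV-algebra $(A;\oplus,\neg,0)$ carries derived operations $1=\neg0$, $x\cdot y=\neg(\neg x\oplus\neg y)$, $x\rightarrow y=\neg x\oplus y$, $x\wedge y$, $x\vee y$ (lattice operations of the order $x\le y$ iff $\neg x\oplus y=1$). The standard MV-algebra is $[0,1]$ with $x\oplus y=\min\{x+y,1\}$, $\neg x=1-x$. A Pavelka algebra is $\mathbf A=(A;\oplus,\neg,\{\mathbf r\mid r\in[0,1]\cap\mathbb Q\})$ with $(A;\oplus,\neg,\mathbf 0)$ an MV-algebra, $\mathbf r\oplus\mathbf s=\mathbf t$ whenever $\min\{r+s,1\}=t$, $\neg\mathbf r=\mathbf s$ whenever $1-r=s$. Filters are filters of the MV-reduct; $\mathrm{Spec_M}\mathbf A$ is the set of maximal proper filters; $\mathbf A/F$ embeds uniquely into $[0,1]$ and $x/F$ is identified with its image. Semisimple: MV-reduct is a subdirect product of simple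 MV-algebras. A tense Pavelka algebra is $(\mathbf A,G,H)$ with $G,H\colon A\to A$ such that for all $x,y$ and constants $\mathbf r$: (PT1) $G(x\wedge y)=G(x)\wedge G(y)$, $H(x\wedge y)=H(x)\wedge H(y)$; (PT2) $\mathbf r\rightarrow G(x)=G(\mathbf r\rightarrow x)$, $\mathbf r\rightarrow H(x)=H(\mathbf r\rightarrow x)$; (PT3) $\neg H(\neg G(x))\le x$, $\neg G(\neg H(x))\le x$. A fuzzy relation $R\colon T\times T\to[0,1]$ is reflexive if $R(t,t)=1$, symmetric if $R(s,t)=R(t,s)$, transitive if $R(s,t)\cdot R(t,u)\le R(s,u)$ for all $s,t,u$. *)

From Stdlib Require Import Reals QArith Qreals ClassicalEpsilon.
Open Scope R_scope.

Record MVAlgebra := {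
  mv_car :> Type;
  mv_oplus : mv_car -> mv_car -> mv_car;
  mv_neg : mv_car -> mv_car;
  mv_zero : mv_car;
  mv_assoc : forall x y z, mv_oplus x (mv_oplus y z) = mv_oplus (mv_oplus x y) z;
  mv_comm : forall x y, mv_oplus x y = mv_oplus y x;
  mv_zero_r : forall x, mv_oplus x mv_zero = x;
  mv_negneg : forall x, mv_neg (mv_neg x) = x;
  mv_one_abs : forall x, mv_oplus x (mv_neg mv_zero) = mv_neg mv_zero;
  mv_luk : forall x y,
    mv_oplus (mv_neg (mv_oplus (mv_neg x) y)) y
    = mv_oplus (mv_neg (mv_oplus (mv_neg y) x)) x
}.

Arguments mv_oplus {m}.
Arguments mv_neg {m}.
Arguments mv_zero {m}.

Section Derived.
Context {A : MVAlgebra}.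
Definition mv_one : A := mv_neg mv_zero.
Definition mv_mult (x y : A) : A := mv_neg (mv_oplus (mv_neg x) (mv_neg y)).
Definition mv_impl (x y : A) : A := mv_oplus (mv_neg x) y.
Definition mv_le (x y : A) : Prop := mv_impl x y = mv_one.
Definition mv_meet (x y : A) : A := mv_mult x (mv_impl x y).
Definition mv_join (x y : A) : A := mv_oplus (mv_neg (mv_oplus (mv_neg x) y)) y.

Definition is_filter (F : A -> Prop) : Prop :=
  F mv_one /\
  (forall x y, F x -> F y -> F (mv_mult x y)) /\
  (forall x y, F x -> mv_le x y -> F y).
Definition proper_filter (F : A -> Prop) : Prop := is_filter F /\ ~ F mv_zero.
Definition maximal_filter (F : A -> Prop) : Prop :=
  proper_filter F /\
  forall F' : A -> Prop, proper_filter F' -> (forall x, F x -> F' x) ->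
    forall x, F' x -> F x.
End Derived.

Definition mv_hom (A B : MVAlgebra) (h : A -> B) : Prop :=
  (forall x y, h (mv_oplus x y) = mv_oplus (h x) (h y)) /\
  (forall x, h (mv_neg x) = mv_neg (h x)) /\
  h mv_zero = mv_zero.

Definition mv_simple (B : MVAlgebra) : Prop :=
  (mv_zero : B) <> mv_one /\
  forall F : B -> Prop, is_filter F ->
    (forall x, F x <-> x = mv_one) \/ (forall x, F x).

(* semisimple: isomorphic to a subdirect product of simple MV-algebras *)
Definition mv_semisimple (A : MVAlgebra) : Prop :=
  exists (I : Type) (B : I -> MVAlgebra) (h : forall i, A -> B i),
    (forall i, mv_simple (B i)) /\
    (forall i, mv_hom A (B i) (h i)) /\
    (forall i, forall b : B i, exists a, h i a = b) /\
    (forall a a' : A, (forall i, h i a = h i a') -> a = a').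

Definition std_oplus (x y : R) : R := Rmin (x + y) 1.
Definition std_neg (x : R) : R := 1 - x.
Definition std_impl (x y : R) : R := Rmin (1 - x + y) 1.
Definition std_mult (x y : R) : R := Rmax (x + y - 1) 0.

Definition unitQ (r : Q) : Prop := 0 <= Q2R r <= 1.

Record PavelkaAlgebra := {
  pv_mv :> MVAlgebra;
  pv_const : Q -> pv_mv;
  pv_const0 : pv_const 0%Q = mv_zero;
  pv_const_oplus : forall r s t, unitQ r -> unitQ s -> unitQ t ->
    Rmin (Q2R r + Q2R s) 1 = Q2R t ->
    mv_oplus (pv_const r) (pv_const s) = pv_const t;
  pv_const_neg : forall r s, unitQ r -> unitQ s ->
    1 - Q2R r = Q2R s -> mv_neg (pv_const r) = pv_const s
}.

Definition tense (A : PavelkaAlgebra) (G H : A -> A) : Prop :=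
  (forall x y, G (mv_meet x y) = mv_meet (G x) (G y)) /\
  (forall x y, H (mv_meet x y) = mv_meet (H x) (H y)) /\
  (forall r x, unitQ r -> mv_impl (pv_const A r) (G x) = G (mv_impl (pv_const A r) x)) /\
  (forall r x, unitQ r -> mv_impl (pv_const A r) (H x) = H (mv_impl (pv_const A r) x)) /\
  (forall x, mv_le (mv_neg (H (mv_neg (G x)))) x) /\
  (forall x, mv_le (mv_neg (G (mv_neg (H x)))) x).

Definition SpecM (A : MVAlgebra) : Type := { F : A -> Prop | maximal_filter F }.

(* x/F : the value of x under the (unique) embedding of A/F into [0,1],
   i.e. the MV-homomorphism h : A -> [0,1] with h^{-1}(1) = F. *)
Definition std_hom_with_kernel {A : MVAlgebra} (F : A -> Prop) (h : A -> R) : Prop :=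
  (forall x, 0 <= h x <= 1) /\
  (forall x y, h (mv_oplus x y) = std_oplus (h x) (h y)) /\
  (forall x, h (mv_neg x) = std_neg (h x)) /\
  h mv_zero = 0 /\
  (forall x, F x <-> h x = 1).

Definition quot_val {A : MVAlgebra} (F : SpecM A) : A -> R :=
  epsilon (inhabits (fun _ : A => 0)) (std_hom_with_kernel (proj1_sig F)).

Definition is_inf (S : R -> Prop) (m : R) : Prop :=
  (forall x, S x -> m <= x) /\ (forall m', (forall x, S x -> m' <= x) -> m' <= m).
Definition Rinf (S : R -> Prop) : R := epsilon (inhabits 0) (is_inf S).

Definition frame_rel {A : PavelkaAlgebra} (G : A -> A) (F F' : SpecM A) : R :=
  Rinf (fun v => exists a : A, v = std_impl (quot_val F' (G a)) (quot_val F a)).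

Definition fz_reflexive {T : Type} (Rl : T -> T -> R) : Prop := forall t, Rl t t = 1.
Definition fz_symmetric {T : Type} (Rl : T -> T -> R) : Prop := forall s t, Rl s t = Rl t s.
Definition fz_transitive {T : Type} (Rl : T -> T -> R) : Prop :=
  forall s t u, std_mult (Rl s t) (Rl t u) <= Rl s u.

From Stdlib Require Import Reals QArith Qreals ClassicalEpsilon.
From Stdlib Require Import Lra Lia List ZArith PArith.
From Stdlib Require Import FunctionalExtensionality PropExtensionality Classical.

Open Scope R_scope.

(** Semisimplicity lets one compare elements pointwise at the
    maximal filters, and each maximal filter [F] is read off through the
    embedding [a |-> a/F] of [A/F] into [0,1].  The "if" directions of (i)-(iii)
    are then direct computations with the infimum defining [R].  The "only if"
    directions rest on an existence lemma: for every maximal filter [F'], every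
    [x] and every [delta > 0] there is a maximal filter [F] with
    [R(F,F') -> x/F <= G(x)/F' + delta]; [F] is a maximal filter extending the
    filter generated by the implications [(x ⊕ q) -> (a ⊕ p)] for rational
    [p, q] with [q + G(x)/F' + delta/2 <= min(G(a)/F' + p, 1)], which is proper by
    (PT1), (PT2) and (PT3).  Symmetry and the [H]-versions of (i) and (iii)
    follow from the duality [R_G(F,F') = R_H(F',F)], a consequence of (PT3). *)

Arguments mv_assoc {m}. Arguments mv_comm {m}. Arguments mv_zero_r {m}.
Arguments mv_negneg {m}. Arguments mv_one_abs {m}. Arguments mv_luk {m}.

Local Notation "x ⊕ y" := (mv_oplus x y) (at level 50, left associativity).
Local Notation "x ⊙ y" := (mv_mult x y) (at level 40, left associativity).
Local Notation "¬ x" := (mv_neg x) (at level 35, right associativity).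

Section MVAlgebraTheory.
Context {A : MVAlgebra}.
Implicit Types x y z a b c u v : A.
Local Notation "0" := (@mv_zero A).
Local Notation "1" := (@mv_one A).

Lemma mv_oplus_0_l x : 0 ⊕ x = x.
Proof. rewrite mv_comm. apply mv_zero_r. Qed.
Lemma mv_oplus_1_r x : x ⊕ 1 = 1.
Proof. apply mv_one_abs. Qed.
Lemma mv_oplus_1_l x : 1 ⊕ x = 1.
Proof. rewrite mv_comm. apply mv_oplus_1_r. Qed.
Lemma mv_neg_1 : ¬ 1 = 0.
Proof. apply mv_negneg. Qed.
Lemma mv_oplus_neg_l x : ¬ x ⊕ x = 1.
Proof.
  pose proof (mv_luk x 1) as E. rewrite mv_oplus_1_r, mv_neg_1, mv_oplus_0_l in E.
  now rewrite <- E.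
Qed.

Lemma mv_le_refl x : mv_le x x.
Proof. apply mv_oplus_neg_l. Qed.
Lemma mv_le_1 x : mv_le x 1.
Proof. apply mv_oplus_1_r. Qed.
Lemma mv_0_le x : mv_le 0 x.
Proof. apply mv_oplus_1_l. Qed.

Lemma mv_join_comm x y : mv_join x y = mv_join y x.
Proof. apply mv_luk. Qed.
Lemma mv_join_r x y : mv_le x y -> mv_join x y = y.
Proof. unfold mv_le, mv_impl, mv_join. intros E. rewrite E, mv_neg_1. apply mv_oplus_0_l. Qed.

Lemma mv_le_antisym x y : mv_le x y -> mv_le y x -> x = y.
Proof.
  intros Hxy Hyx. rewrite <- (mv_join_r _ _ Hxy), mv_join_comm. symmetry. now apply mv_join_r.
Qed.

Lemma mv_le_oplus_r x z : mv_le x (x ⊕ z).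
Proof. unfold mv_le, mv_impl. rewrite mv_assoc, mv_oplus_neg_l. apply mv_oplus_1_l. Qed.
Lemma mv_le_oplus_l x z : mv_le x (z ⊕ x).
Proof. rewrite mv_comm. apply mv_le_oplus_r. Qed.

Lemma mv_le_oplus_diff x y : mv_le x y -> y = x ⊕ ¬ (¬ y ⊕ x).
Proof.
  intros Hxy. rewrite <- (mv_join_r _ _ Hxy) at 1. rewrite mv_join_comm. apply mv_comm.
Qed.

Lemma mv_le_trans x y z : mv_le x y -> mv_le y z -> mv_le x z.
Proof.
  intros Hxy Hyz. rewrite (mv_le_oplus_diff _ _ Hyz), (mv_le_oplus_diff _ _ Hxy), <- mv_assoc.
  apply mv_le_oplus_r.
Qed.

Lemma mv_oplus_le_mono_r x y z : mv_le x y -> mv_le (x ⊕ z) (y ⊕ z).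
Proof.
  intros Hxy. rewrite (mv_le_oplus_diff _ _ Hxy). set (w := ¬ (¬ y ⊕ x)).
  replace (x ⊕ w ⊕ z) with (x ⊕ z ⊕ w) by (rewrite <- !mv_assoc; f_equal; apply mv_comm).
  apply mv_le_oplus_r.
Qed.
Lemma mv_neg_le_contravar x y : mv_le x y -> mv_le (¬ y) (¬ x).
Proof. unfold mv_le, mv_impl. now rewrite mv_negneg, mv_comm. Qed.

Lemma mv_le_0 x : mv_le x 0 -> x = 0.
Proof. intros H. apply mv_le_antisym; auto using mv_0_le. Qed.
Lemma mv_1_le x : mv_le 1 x -> x = 1.
Proof. intros H. apply mv_le_antisym; auto using mv_le_1. Qed.

Lemma mv_mult_comm x y : x ⊙ y = y ⊙ x.
Proof. unfold mv_mult. now rewrite mv_comm. Qed.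
Lemma mv_mult_assoc x y z : x ⊙ (y ⊙ z) = x ⊙ y ⊙ z.
Proof. unfold mv_mult. now rewrite !mv_negneg, mv_assoc. Qed.
Lemma mv_mult_1_r x : x ⊙ 1 = x.
Proof. unfold mv_mult. now rewrite mv_neg_1, mv_zero_r, mv_negneg. Qed.
Lemma mv_mult_1_l x : 1 ⊙ x = x.
Proof. rewrite mv_mult_comm. apply mv_mult_1_r. Qed.
Lemma mv_mult_neg_r x : x ⊙ ¬ x = 0.
Proof. unfold mv_mult. now rewrite mv_negneg, mv_oplus_neg_l, mv_neg_1. Qed.

Lemma mv_mult_shuffle a b c d : a ⊙ b ⊙ (c ⊙ d) = a ⊙ c ⊙ (b ⊙ d).
Proof.
  rewrite mv_mult_assoc, <- (mv_mult_assoc a b c), (mv_mult_comm b c), mv_mult_assoc.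
  now rewrite <- mv_mult_assoc.
Qed.

Lemma mv_mult_le_mono_r x y z : mv_le x y -> mv_le (x ⊙ z) (y ⊙ z).
Proof.
  intros Hxy. apply mv_neg_le_contravar, mv_oplus_le_mono_r, mv_neg_le_contravar, Hxy.
Qed.
Lemma mv_mult_le_mono_l x y z : mv_le x y -> mv_le (z ⊙ x) (z ⊙ y).
Proof. intros Hxy. rewrite (mv_mult_comm z x), (mv_mult_comm z y). now apply mv_mult_le_mono_r. Qed.
Lemma mv_mult_le_mono x y x' y' : mv_le x y -> mv_le x' y' -> mv_le (x ⊙ x') (y ⊙ y').
Proof.
  intros. eapply mv_le_trans; [apply mv_mult_le_mono_r | apply mv_mult_le_mono_l]; eauto.
Qed.

Lemma mv_residuation x y z : mv_le (x ⊙ y) z <-> mv_le x (¬ y ⊕ z).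
Proof. unfold mv_le, mv_impl, mv_mult. rewrite mv_negneg, mv_assoc. tauto. Qed.

Lemma mv_mult_le_l x y : mv_le (x ⊙ y) x.
Proof. apply mv_residuation, mv_le_oplus_l. Qed.
Lemma mv_mult_le_r x y : mv_le (x ⊙ y) y.
Proof. rewrite mv_mult_comm. apply mv_mult_le_l. Qed.
Lemma mv_mult_impl_le a b : mv_le (a ⊙ mv_impl a b) b.
Proof. rewrite mv_mult_comm. apply mv_residuation, mv_le_refl. Qed.

Lemma mv_meet_l x y : mv_le x y -> mv_meet x y = x.
Proof. intros Hxy. unfold mv_meet. rewrite Hxy. apply mv_mult_1_r. Qed.

Lemma mv_join_ub_r x y : mv_le y (mv_join x y).
Proof. apply mv_le_oplus_l. Qed.
Lemma mv_join_ub_l x y : mv_le x (mv_join x y).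
Proof. rewrite mv_join_comm. apply mv_join_ub_r. Qed.
Lemma mv_join_lub x y t : mv_le x t -> mv_le y t -> mv_le (mv_join x y) t.
Proof.
  intros Hxt Hyt. apply mv_le_trans with (mv_join t y).
  - apply mv_oplus_le_mono_r, mv_neg_le_contravar, mv_oplus_le_mono_r.
    apply mv_neg_le_contravar, Hxt.
  - rewrite mv_join_comm, (mv_join_r _ _ Hyt). apply mv_le_refl.
Qed.

Lemma mv_mult_join_distr_l z x y : z ⊙ mv_join x y = mv_join (z ⊙ x) (z ⊙ y).
Proof.
  apply mv_le_antisym.
  - rewrite mv_mult_comm. apply mv_residuation.
    apply mv_join_lub; apply mv_residuation; rewrite mv_mult_comm;
      [apply mv_join_ub_l | apply mv_join_ub_r].
  - apply mv_join_lub; apply mv_mult_le_mono_l; [apply mv_join_ub_l | apply mv_join_ub_r].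
Qed.

Lemma mv_oplus_mult_absorb a b : a ⊕ b ⊕ a ⊙ b = a ⊕ b.
Proof.
  assert (Hs : a ⊕ b = (a ⊕ b) ⊙ ¬ a ⊕ a).
  { rewrite <- (mv_join_r _ _ (mv_le_oplus_r a b)) at 1. rewrite mv_join_comm.
    unfold mv_join, mv_mult. now rewrite mv_negneg. }
  assert (Hm : (a ⊕ b) ⊙ ¬ a = (¬ a ⊕ ¬ b) ⊙ b).
  { assert (E : (¬ a ⊕ ¬ b) ⊙ b = (b ⊕ a) ⊙ ¬ a).
    { pose proof (f_equal mv_neg (mv_luk a (¬ b))) as E. unfold mv_mult.
      rewrite !mv_negneg in *. exact E. }
    now rewrite E, (mv_comm a b). }
  rewrite Hs at 1. rewrite Hm, (mv_comm _ a), <- mv_assoc.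
  replace ((¬ a ⊕ ¬ b) ⊙ b ⊕ a ⊙ b) with (mv_join b (a ⊙ b))
    by (unfold mv_join, mv_mult; now rewrite (mv_comm (¬ b))).
  rewrite mv_join_comm, mv_join_r by apply mv_mult_le_r. reflexivity.
Qed.

Lemma mv_prelinearity x y : mv_join (mv_impl x y) (mv_impl y x) = 1.
Proof.
  unfold mv_join, mv_impl.
  replace (¬ (¬ x ⊕ y) ⊕ (¬ y ⊕ x)) with (¬ y ⊕ x); [apply mv_oplus_neg_l|].
  pose proof (mv_oplus_mult_absorb x (¬ y)) as E. unfold mv_mult in E. rewrite mv_negneg in E.
  rewrite (mv_comm (¬ y) x), (mv_comm (¬ (¬ x ⊕ y))). now rewrite E.
Qed.

Lemma mv_impl_1_l x : mv_impl 1 x = x.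
Proof. unfold mv_impl. rewrite mv_neg_1. apply mv_oplus_0_l. Qed.
Lemma mv_impl_0_r x : mv_impl x 0 = ¬ x.
Proof. apply mv_zero_r. Qed.
Lemma mv_impl_contrapositive a b : mv_impl a b = mv_impl (¬ b) (¬ a).
Proof. unfold mv_impl. rewrite mv_negneg. apply mv_comm. Qed.

Lemma mv_impl_trans a b c : mv_le (mv_impl a b ⊙ mv_impl b c) (mv_impl a c).
Proof.
  apply (mv_residuation _ a c). rewrite mv_mult_comm, mv_mult_assoc.
  eapply mv_le_trans; [apply mv_mult_le_mono_r, mv_mult_impl_le | apply mv_mult_impl_le].
Qed.

Lemma mv_impl_oplus a b c : mv_le (mv_impl a b) (mv_impl (a ⊕ c) (b ⊕ c)).
Proof.
  apply (mv_residuation _ (a ⊕ c)). rewrite mv_mult_comm. apply mv_residuation.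
  rewrite mv_assoc. apply mv_oplus_le_mono_r, mv_join_ub_l.
Qed.

Lemma mv_impl_mult a b c d :
  mv_le (mv_impl a b ⊙ mv_impl c d) (mv_impl (a ⊙ c) (b ⊙ d)).
Proof.
  apply (mv_residuation _ (a ⊙ c)).
  replace (mv_impl a b ⊙ mv_impl c d ⊙ (a ⊙ c)) with (a ⊙ mv_impl a b ⊙ (c ⊙ mv_impl c d))
    by (rewrite mv_mult_shuffle; apply mv_mult_comm).
  apply mv_mult_le_mono; apply mv_mult_impl_le.
Qed.

Fixpoint mv_pow (x : A) (n : nat) : A :=
  match n with O => 1 | S n => x ⊙ mv_pow x n end.

Lemma mv_pow_add x n m : mv_pow x (n + m) = mv_pow x n ⊙ mv_pow x m.
Proof.
  induction n; simpl; [now rewrite mv_mult_1_l | now rewrite IHn, mv_mult_assoc].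
Qed.
Lemma mv_pow_le_anti x n m : (n <= m)%nat -> mv_le (mv_pow x m) (mv_pow x n).
Proof.
  intros Hnm. replace m with (n + (m - n))%nat by lia. rewrite mv_pow_add. apply mv_mult_le_l.
Qed.

Lemma mv_impl_pow a b n : mv_le (mv_pow (mv_impl a b) n) (mv_impl (mv_pow a n) (mv_pow b n)).
Proof.
  induction n; simpl.
  - unfold mv_impl. rewrite mv_oplus_neg_l. apply mv_le_refl.
  - eapply mv_le_trans; [apply mv_mult_le_mono_l, IHn | apply mv_impl_mult].
Qed.

Lemma mv_join_pow_l u v n : mv_join u v = 1 -> mv_join (mv_pow u n) v = 1.
Proof.
  intros Huv. induction n; simpl; apply mv_1_le; [apply mv_join_ub_l|].
  rewrite <- (mv_mult_1_r 1), <- Huv at 1. rewrite <- IHn, mv_mult_join_distr_l.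
  apply mv_join_lub.
  - rewrite mv_mult_comm, mv_mult_join_distr_l. apply mv_join_lub.
    + rewrite mv_mult_comm. apply mv_join_ub_l.
    + eapply mv_le_trans; [apply mv_mult_le_r | apply mv_join_ub_r].
  - eapply mv_le_trans; [apply mv_mult_le_r | apply mv_join_ub_r].
Qed.

Lemma mv_join_pow u v n m : mv_join u v = 1 -> mv_join (mv_pow u n) (mv_pow v m) = 1.
Proof.
  intros Huv. apply mv_join_pow_l. rewrite mv_join_comm. apply mv_join_pow_l.
  now rewrite mv_join_comm.
Qed.

Lemma mv_join_0 : mv_join 0 0 = 0.
Proof. unfold mv_join. now rewrite mv_oplus_1_l, mv_neg_1, mv_oplus_0_l. Qed.

Lemma mv_mult_pows_0 u v g n :
  mv_join u v = 1 -> g ⊙ mv_pow u n = 0 -> g ⊙ mv_pow v n = 0 -> g = 0.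
Proof.
  intros Huv Hu Hv. rewrite <- (mv_mult_1_r g), <- (mv_join_pow u v n n Huv).
  now rewrite mv_mult_join_distr_l, Hu, Hv, mv_join_0.
Qed.

End MVAlgebraTheory.

Section Filters.
Context {A : MVAlgebra}.
Implicit Types (F : A -> Prop) (x y u : A).

Lemma filter_1 F : is_filter F -> F mv_one.
Proof. intros [H _]; exact H. Qed.
Lemma filter_mult F x y : is_filter F -> F x -> F y -> F (x ⊙ y).
Proof. intros [_ [H _]]; auto. Qed.
Lemma filter_up F x y : is_filter F -> F x -> mv_le x y -> F y.
Proof. intros [_ [_ H]]; eauto. Qed.
Lemma filter_pow F x n : is_filter F -> F x -> F (mv_pow x n).
Proof. intros Hf Hx; induction n; simpl; [now apply filter_1|now apply filter_mult]. Qed.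

Definition filter_gen F u : A -> Prop :=
  fun z => exists f n, F f /\ mv_le (f ⊙ mv_pow u n) z.

Lemma filter_gen_is_filter F u : is_filter F -> is_filter (filter_gen F u).
Proof.
  intros Hf. split; [|split].
  - exists mv_one, 0%nat. split; [now apply filter_1|]. simpl. rewrite mv_mult_1_l. apply mv_le_refl.
  - intros x y [f [n [Hf1 Hx]]] [g [m [Hg1 Hy]]]. exists (f ⊙ g), (n + m)%nat.
    split; [now apply filter_mult|]. rewrite mv_pow_add, mv_mult_shuffle. now apply mv_mult_le_mono.
  - intros x y [f [n [Hf1 Hx]]] Hxy. exists f, n. split; eauto using mv_le_trans.
Qed.

Lemma maximal_filter_outside F u : maximal_filter F -> ~ F u ->
  exists f n, F f /\ f ⊙ mv_pow u n = mv_zero.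
Proof.
  intros [[Hf Hp] Hmax] Hu.
  destruct (classic (filter_gen F u mv_zero)) as [[f [n [Hf1 Hle]]]|Hgen].
  - exists f, n. split; auto. now apply mv_le_0.
  - exfalso. apply Hu, (Hmax (filter_gen F u)).
    + split; auto using filter_gen_is_filter.
    + intros x Hx. exists x, 0%nat. split; auto. simpl. rewrite mv_mult_1_r. apply mv_le_refl.
    + exists mv_one, 1%nat. split; [now apply filter_1|].
      simpl. rewrite mv_mult_1_r, mv_mult_1_l. apply mv_le_refl.
Qed.

(* Prelinearity: if neither implication were in [F], powers of them would be
   annihilated by elements of [F], and these powers have join [1]. *)
Lemma maximal_filter_prime F a b :
  maximal_filter F -> F (mv_impl a b) \/ F (mv_impl b a).
Proof.
  intros HF. apply NNPP. intros Hn. apply not_or_and in Hn as [Hab Hba].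
  destruct (maximal_filter_outside _ _ HF Hab) as [f [n [Hf Hfe]]].
  destruct (maximal_filter_outside _ _ HF Hba) as [g [m [Hg Hge]]].
  destruct HF as [[HFf HFp] _]. apply HFp.
  replace mv_zero with (f ⊙ g); [now apply filter_mult|].
  apply (mv_mult_pows_0 (mv_impl a b) (mv_impl b a) _ (n + m)); [apply mv_prelinearity| |].
  - apply mv_le_0. rewrite <- Hfe, (mv_mult_comm f g), <- mv_mult_assoc.
    eapply mv_le_trans; [apply mv_mult_le_r|]. apply mv_mult_le_mono_l, mv_pow_le_anti. lia.
  - apply mv_le_0. rewrite <- Hge, <- mv_mult_assoc.
    eapply mv_le_trans; [apply mv_mult_le_r|]. apply mv_mult_le_mono_l, mv_pow_le_anti. lia.
Qed.

(** * Every proper filter lies in a maximal one *)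

(* Zorn's lemma, proved by the Bourbaki-Witt tower argument: [tower] is the
   least family closed under [next_filter] and unions, it is a chain, and its
   union is maximal because [next_filter] cannot enlarge it. *)
Section MaximalExtension.
Variable Phi0 : A -> Prop.
Hypothesis HPhi0 : proper_filter Phi0.

Definition subpred (P Q : A -> Prop) := forall x, P x -> Q x.
Definition proper_extension (Psi : A -> Prop) := proper_filter Psi /\ subpred Phi0 Psi.
Definition strict_extension (Psi Psi' : A -> Prop) :=
  subpred Psi Psi' /\ proper_extension Psi' /\ exists x, Psi' x /\ ~ Psi x.

Definition next_filter (Psi : A -> Prop) : A -> Prop :=
  match excluded_middle_informative (exists Psi', strict_extension Psi Psi') with
  | left h => proj1_sig (constructive_indefinite_description _ h)
  | right _ => Psi
  end.

Lemma next_filter_incl Psi : subpred Psi (next_filter Psi).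
Proof.
  unfold next_filter. destruct excluded_middle_informative as [h|h]; [|now intros x].
  destruct constructive_indefinite_description as [P' HP]. apply HP.
Qed.
Lemma next_filter_strict Psi :
  (exists Psi', strict_extension Psi Psi') -> strict_extension Psi (next_filter Psi).
Proof.
  intros h0. unfold next_filter. destruct excluded_middle_informative as [h|h]; [|contradiction].
  destruct constructive_indefinite_description as [P' HP]. apply HP.
Qed.
Lemma next_filter_fixed Psi : ~ (exists Psi', strict_extension Psi Psi') -> next_filter Psi = Psi.
Proof.
  intros h0. unfold next_filter. destruct excluded_middle_informative; [contradiction|auto].
Qed.

Definition tower_union (C : (A -> Prop) -> Prop) : A -> Prop :=
  fun x => Phi0 x \/ exists Psi, C Psi /\ Psi x.

Inductive tower : (A -> Prop) -> Prop :=
| tower_next Psi : tower Psi -> tower (next_filter Psi)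
| tower_sup (C : (A -> Prop) -> Prop) : (forall Psi, C Psi -> tower Psi) -> tower (tower_union C).

Lemma subpred_antisym (P Q : A -> Prop) : subpred P Q -> subpred Q P -> P = Q.
Proof.
  intros H1 H2. apply functional_extensionality. intros x.
  apply propositional_extensionality. split; auto.
Qed.

Lemma tower_incl_base Psi : tower Psi -> subpred Phi0 Psi.
Proof. induction 1; intros x Hx; [apply next_filter_incl|left]; auto. Qed.

Definition extreme (c : A -> Prop) :=
  forall Psi, tower Psi -> subpred Psi c -> ~ subpred c Psi -> subpred (next_filter Psi) c.

Lemma extreme_compare c : tower c -> extreme c ->
  forall Psi, tower Psi -> subpred Psi c \/ subpred (next_filter c) Psi.
Proof.
  intros Tc Ec Psi TPsi. induction TPsi as [y Ty IH|C HC IH].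
  - destruct IH as [H|H].
    + destruct (classic (subpred c y)) as [H'|H'].
      * assert (y = c) by (apply subpred_antisym; auto). subst. right. now intros z.
      * left. apply Ec; auto.
    + right. intros z Hz. apply next_filter_incl. auto.
  - destruct (classic (exists Psi, C Psi /\ subpred (next_filter c) Psi)) as [[Psi [HP1 HP2]]|HN].
    + right. intros z Hz. right. eauto.
    + left. intros z [Hz|[Psi [HP Hz]]]; [now apply (tower_incl_base c Tc)|].
      destruct (IH Psi HP) as [H|H]; auto. exfalso. eauto.
Qed.

Lemma tower_extreme c : tower c -> extreme c.
Proof.
  induction 1 as [y Ty IH|C HC IH]; intros Psi TPsi H1 H2.
  - destruct (extreme_compare y Ty IH Psi TPsi) as [H|H]; [|contradiction].
    destruct (classic (subpred y Psi)) as [H'|H'].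
    + assert (Psi = y) by (apply subpred_antisym; auto). subst. now intros z.
    + intros z Hz. apply next_filter_incl. apply (IH Psi TPsi H H'). auto.
  - destruct (classic (exists Psi', C Psi' /\ ~ subpred Psi' Psi)) as [[Psi' [HP HPx]]|HN].
    + destruct (extreme_compare Psi' (HC Psi' HP) (IH Psi' HP) Psi TPsi) as [H|H].
      * intros z Hz. right. exists Psi'. split; auto. apply (IH Psi' HP Psi TPsi H HPx). auto.
      * exfalso. apply HPx. intros z Hz. apply H, next_filter_incl, Hz.
    + exfalso. apply H2. intros z [Hz|[Psi' [HP Hz]]]; [now apply (tower_incl_base Psi TPsi)|].
      destruct (classic (subpred Psi' Psi)); auto. exfalso. eauto.
Qed.

Lemma tower_chain P Q : tower P -> tower Q -> subpred P Q \/ subpred Q P.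
Proof.
  intros TP TQ. destruct (extreme_compare Q TQ (tower_extreme Q TQ) P TP) as [H|H]; auto.
  right. intros z Hz. apply H, next_filter_incl, Hz.
Qed.

Lemma tower_union_proper (C : (A -> Prop) -> Prop) :
  (forall Psi, C Psi -> tower Psi /\ proper_extension Psi) -> proper_extension (tower_union C).
Proof.
  intros IH. destruct HPhi0 as [Hf0 Hp0].
  set (member := fun P => P = Phi0 \/ C P).
  assert (Hmem : forall x, tower_union C x -> exists P, member P /\ P x).
  { intros x [Hx|[P [HP Hx]]]; [exists Phi0|exists P]; unfold member; auto. }
  assert (Hfil : forall P, member P -> is_filter P).
  { intros P [->|HP]; [exact Hf0|apply (IH P HP)]. }
  assert (Hcmp : forall P Q, member P -> member Q -> subpred P Q \/ subpred Q P).
  { intros P Q [->|HP] [->|HQ]; try (left; now intros x);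
      try (left; now apply tower_incl_base, (IH Q HQ));
      try (right; now apply tower_incl_base, (IH P HP)).
    apply tower_chain; [apply (IH P HP)|apply (IH Q HQ)]. }
  assert (Hin : forall P x, member P -> P x -> tower_union C x).
  { intros P x [->|HP] Px; [now left|right; eauto]. }
  split; [split; [split; [|split]|]|].
  - left. now apply filter_1.
  - intros x y Hx Hy.
    destruct (Hmem x Hx) as [P [MP Px]]. destruct (Hmem y Hy) as [Q [MQ Qy]].
    destruct (Hcmp P Q MP MQ) as [HPQ|HQP].
    + apply (Hin Q); auto. apply filter_mult; auto.
    + apply (Hin P); auto. apply filter_mult; auto.
  - intros x y Hx Hxy. destruct (Hmem x Hx) as [P [MP Px]].
    apply (Hin P); auto. eapply filter_up; eauto.
  - intros [H|[P [HP H]]]; auto. destruct (IH P HP) as [_ [[_ NP] _]]. auto.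
  - intros x Hx. now left.
Qed.

Lemma tower_proper Psi : tower Psi -> proper_extension Psi.
Proof.
  induction 1 as [y Ty IH|C HC IH].
  - destruct (classic (exists Psi', strict_extension y Psi')) as [h|h].
    + apply next_filter_strict in h. apply h.
    + now rewrite next_filter_fixed.
  - apply tower_union_proper. auto.
Qed.

Lemma maximal_filter_extension : exists F, maximal_filter F /\ subpred Phi0 F.
Proof.
  set (M := tower_union tower).
  assert (TM : tower M) by (apply tower_sup; auto).
  destruct (tower_proper M TM) as [PM SM].
  exists M. split; [split|]; auto.
  intros F' HF' Hsub x Hx. apply NNPP. intros Hnx.
  assert (Hb : exists Psi', strict_extension M Psi').
  { exists F'. split; [exact Hsub|]. split; [split; [exact HF'|]|]; eauto.
    intros z Hz. apply Hsub, SM, Hz. }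
  apply next_filter_strict in Hb. destruct Hb as [_ [_ [z [Hz1 Hz2]]]].
  apply Hz2. right. exists (next_filter M). split; auto. apply tower_next, TM.
Qed.

End MaximalExtension.
End Filters.

Ltac minmax_lra :=
  unfold std_oplus, std_neg, std_impl, std_mult in *; unfold Rmin, Rmax in *;
  repeat destruct Rle_dec; lra.

Definition rat01 (r : R) : Prop := exists q : Q, unitQ q /\ Q2R q = r.

Lemma Q2R_0 : Q2R 0%Q = 0.
Proof. unfold Q2R. simpl. lra. Qed.
Lemma Q2R_1 : Q2R 1%Q = 1.
Proof. unfold Q2R. simpl. lra. Qed.

Lemma rat01_range r : rat01 r -> 0 <= r <= 1.
Proof. intros [q [Hq <-]]. exact Hq. Qed.
Lemma rat01_0 : rat01 0.
Proof. exists 0%Q. unfold unitQ. rewrite Q2R_0. repeat split; lra. Qed.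
Lemma rat01_1 : rat01 1.
Proof. exists 1%Q. unfold unitQ. rewrite Q2R_1. repeat split; lra. Qed.
Lemma rat01_neg r : rat01 r -> rat01 (1 - r).
Proof.
  intros [q [Hq E]]. exists (1 - q)%Q. unfold unitQ in *.
  rewrite !Q2R_minus, !Q2R_1. repeat split; lra.
Qed.
Lemma rat01_oplus r s : rat01 r -> rat01 s -> rat01 (Rmin (r + s) 1).
Proof.
  intros [q [Hq E]] [p [Hp F]]. unfold unitQ in *. unfold Rmin. destruct Rle_dec.
  - exists (q + p)%Q. unfold unitQ. rewrite !Q2R_plus. repeat split; lra.
  - apply rat01_1.
Qed.
Lemma rat01_mult r s : rat01 r -> rat01 s -> rat01 (Rmax (r + s - 1) 0).
Proof.
  intros [q [Hq E]] [p [Hp F]]. unfold unitQ in *. unfold Rmax. destruct Rle_dec.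
  - apply rat01_0.
  - exists (q + p - 1)%Q. unfold unitQ. rewrite !Q2R_minus, !Q2R_plus, !Q2R_1. repeat split; lra.
Qed.

Lemma rat01_frac k n : (0 < n)%nat -> (k <= n)%nat -> rat01 (INR k / INR n).
Proof.
  intros Hn Hk.
  assert (E : Q2R (Qmake (Z.of_nat k) (Pos.of_nat n)) = INR k / INR n).
  { unfold Q2R. simpl. rewrite <- INR_IZR_INZ.
    replace (IZR (Z.pos (Pos.of_nat n))) with (INR n); [reflexivity|].
    rewrite INR_IZR_INZ. f_equal. rewrite <- (Nat2Pos.id n) at 1 by lia. apply positive_nat_Z. }
  exists (Qmake (Z.of_nat k) (Pos.of_nat n)). split; auto. unfold unitQ. rewrite E.
  apply lt_0_INR in Hn. apply le_INR in Hk. split.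
  - apply Rmult_le_pos; [apply pos_INR|left; now apply Rinv_0_lt_compat].
  - apply Rmult_le_reg_r with (INR n); auto. unfold Rdiv. rewrite Rmult_assoc, Rinv_l by lra. lra.
Qed.

Lemma rat01_frac_inv r : rat01 r -> exists k n, (0 < n)%nat /\ (k <= n)%nat /\ r = INR k / INR n.
Proof.
  intros [[a b] [Hq <-]]. unfold unitQ, Q2R in *. simpl in *.
  assert (Hb : 0 < IZR (Z.pos b)) by (apply IZR_lt; lia).
  assert (Ha : (0 <= a)%Z).
  { destruct (Z_le_gt_dec 0 a) as [h|h]; auto. exfalso. apply Z.gt_lt, IZR_lt in h.
    assert (IZR a * / IZR (Z.pos b) < 0) by (apply Rmult_neg_pos; auto; now apply Rinv_0_lt_compat).
    lra. }
  assert (Eb : INR (Pos.to_nat b) = IZR (Z.pos b)) by (rewrite INR_IZR_INZ, positive_nat_Z; auto).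
  assert (Ea : INR (Z.to_nat a) = IZR a) by (rewrite INR_IZR_INZ, Z2Nat.id; auto).
  exists (Z.to_nat a), (Pos.to_nat b). split; [lia|]. rewrite Ea, Eb. split; [|reflexivity].
  apply INR_le. rewrite Ea, Eb. destruct Hq as [_ Hq1].
  apply Rmult_le_reg_r with (/ IZR (Z.pos b)); [now apply Rinv_0_lt_compat|]. rewrite Rinv_r; lra.
Qed.

Lemma rat01_dense lo hi : lo < hi -> 0 <= hi -> hi <= 1 ->
  exists r, rat01 r /\ lo < r /\ r <= hi.
Proof.
  intros Hlh Hhi0 Hhi1.
  destruct (archimed (/ (hi - lo))) as [Hn _].
  set (n := Z.to_nat (up (/ (hi - lo)))).
  assert (Hpos : 0 < / (hi - lo)) by (apply Rinv_0_lt_compat; lra).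
  assert (En : INR n = IZR (up (/ (hi - lo)))).
  { unfold n. rewrite INR_IZR_INZ, Z2Nat.id; auto. apply le_IZR. lra. }
  assert (Hn0 : (0 < n)%nat) by (apply INR_lt; simpl; lra).
  assert (HnR : 0 < INR n) by (apply lt_0_INR; auto).
  assert (Hgap : 1 < (hi - lo) * INR n).
  { assert ((hi - lo) * / (hi - lo) = 1) by (field; lra). rewrite En. nra. }
  destruct (archimed (hi * INR n)) as [Hz1 Hz2].
  set (z := up (hi * INR n)) in *.
  assert (Hz : (1 <= z)%Z).
  { assert (0 <= hi * INR n) by (apply Rmult_le_pos; lra). apply le_IZR. simpl.
    assert (0 < z)%Z by (apply lt_IZR; lra). apply IZR_le. lia. }
  set (k := Z.to_nat (z - 1)).
  assert (Ek : INR k = IZR z - 1) by (unfold k; rewrite INR_IZR_INZ, Z2Nat.id, minus_IZR by lia; auto).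
  assert (Hk : (k <= n)%nat).
  { apply INR_le. rewrite Ek. assert (hi * INR n <= INR n) by nra. lra. }
  exists (INR k / INR n). split; [now apply rat01_frac|].
  unfold Rdiv. split; apply Rmult_le_reg_r with (INR n) || apply Rmult_lt_reg_r with (INR n); auto;
    rewrite Rmult_assoc, Rinv_l, Rmult_1_r, Ek by lra; nra.
Qed.

Section StdHom.
Context {A : MVAlgebra}.

Definition std_hom (h : A -> R) : Prop :=
  (forall x, 0 <= h x <= 1) /\
  (forall x y, h (x ⊕ y) = std_oplus (h x) (h y)) /\
  (forall x, h (¬ x) = std_neg (h x)) /\
  h mv_zero = 0.

Lemma std_hom_with_kernel_hom F h : std_hom_with_kernel F h -> std_hom h.
Proof. intros [H1 [H2 [H3 [H4 _]]]]. repeat split; auto; apply H1. Qed.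

Variable h : A -> R.
Hypothesis Hh : std_hom h.

Lemma std_hom_range x : 0 <= h x <= 1. Proof. apply Hh. Qed.
Lemma std_hom_oplus x y : h (x ⊕ y) = Rmin (h x + h y) 1. Proof. apply Hh. Qed.
Lemma std_hom_neg x : h (¬ x) = 1 - h x. Proof. apply Hh. Qed.
Lemma std_hom_0 : h mv_zero = 0. Proof. apply Hh. Qed.
Lemma std_hom_1 : h mv_one = 1. Proof. unfold mv_one. rewrite std_hom_neg, std_hom_0. lra. Qed.
Lemma std_hom_mult x y : h (x ⊙ y) = Rmax (h x + h y - 1) 0.
Proof.
  unfold mv_mult. rewrite std_hom_neg, std_hom_oplus, !std_hom_neg.
  pose proof (std_hom_range x); pose proof (std_hom_range y). minmax_lra.
Qed.
Lemma std_hom_impl x y : h (mv_impl x y) = Rmin (1 - h x + h y) 1.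
Proof. unfold mv_impl. now rewrite std_hom_oplus, std_hom_neg. Qed.
Lemma std_hom_meet x y : h (mv_meet x y) = Rmin (h x) (h y).
Proof.
  unfold mv_meet. rewrite std_hom_mult, std_hom_impl.
  pose proof (std_hom_range x); pose proof (std_hom_range y). minmax_lra.
Qed.
Lemma std_hom_le x y : mv_le x y -> h x <= h y.
Proof.
  intros Hxy. pose proof (f_equal h Hxy) as E. rewrite std_hom_impl, std_hom_1 in E.
  pose proof (std_hom_range x); pose proof (std_hom_range y). minmax_lra.
Qed.

End StdHom.

Ltac std_hom_simpl h Hh :=
  repeat first [ rewrite (std_hom_oplus h Hh) | rewrite (std_hom_neg h Hh)
               | rewrite (std_hom_0 h Hh) | rewrite (std_hom_1 h Hh)
               | rewrite (std_hom_mult h Hh) | rewrite (std_hom_impl h Hh)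
               | rewrite (std_hom_meet h Hh) ].

Section PavelkaConstants.
Context {A : PavelkaAlgebra}.

(* The constant of a real [r]; when [r] is not a rational of [0,1] this is the
   junk value [pv_const A 0]. *)
Definition rconst (r : R) : A :=
  pv_const A (epsilon (inhabits 0%Q) (fun q => unitQ q /\ Q2R q = r)).

Lemma rconst_spec r : rat01 r -> exists q, unitQ q /\ Q2R q = r /\ rconst r = pv_const A q.
Proof.
  intros Hr. destruct (epsilon_spec (inhabits 0%Q) (fun q => unitQ q /\ Q2R q = r) Hr) as [H1 H2].
  eexists. eauto.
Qed.

Lemma unitQ_0 : unitQ 0%Q. Proof. unfold unitQ. rewrite Q2R_0. lra. Qed.
Lemma unitQ_1 : unitQ 1%Q. Proof. unfold unitQ. rewrite Q2R_1. lra. Qed.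

Lemma pv_const_Q2R q1 q2 : unitQ q1 -> unitQ q2 -> Q2R q1 = Q2R q2 -> pv_const A q1 = pv_const A q2.
Proof.
  intros H1 H2 E. rewrite <- (pv_const_oplus A q1 0%Q q2 H1 unitQ_0 H2).
  - rewrite pv_const0. symmetry. apply mv_zero_r.
  - rewrite Q2R_0, Rplus_0_r, E. destruct H2. minmax_lra.
Qed.

Lemma rconst_Q2R q : unitQ q -> rconst (Q2R q) = pv_const A q.
Proof.
  intros Hq. destruct (rconst_spec (Q2R q)) as [q' [H1 [H2 ->]]]; [exists q; auto|].
  now apply pv_const_Q2R.
Qed.

Lemma rconst_0 : rconst 0 = mv_zero.
Proof. rewrite <- Q2R_0, rconst_Q2R by apply unitQ_0. apply pv_const0. Qed.
Lemma rconst_1 : rconst 1 = mv_one.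
Proof.
  rewrite <- Q2R_1, rconst_Q2R by apply unitQ_1. unfold mv_one. rewrite <- pv_const0.
  symmetry. apply pv_const_neg; [apply unitQ_0|apply unitQ_1|]. rewrite Q2R_0, Q2R_1. lra.
Qed.
Lemma rconst_neg r : rat01 r -> ¬ rconst r = rconst (1 - r).
Proof.
  intros Hr. destruct (rconst_spec r Hr) as [q [H1 [H2 ->]]].
  destruct (rconst_spec (1 - r) (rat01_neg r Hr)) as [p [G1 [G2 ->]]].
  apply pv_const_neg; auto. lra.
Qed.
Lemma rconst_oplus r s : rat01 r -> rat01 s -> rconst r ⊕ rconst s = rconst (Rmin (r + s) 1).
Proof.
  intros Hr Hs. destruct (rconst_spec r Hr) as [q [H1 [H2 ->]]].
  destruct (rconst_spec s Hs) as [p [G1 [G2 ->]]].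
  destruct (rconst_spec _ (rat01_oplus r s Hr Hs)) as [o [K1 [K2 ->]]].
  apply pv_const_oplus; auto. congruence.
Qed.
Lemma rconst_mult r s : rat01 r -> rat01 s -> rconst r ⊙ rconst s = rconst (Rmax (r + s - 1) 0).
Proof.
  intros Hr Hs. unfold mv_mult. rewrite !rconst_neg, rconst_oplus by auto using rat01_neg.
  rewrite rconst_neg by auto using rat01_oplus, rat01_neg.
  f_equal. apply rat01_range in Hr; apply rat01_range in Hs. minmax_lra.
Qed.
Lemma rconst_pow r n : rat01 r ->
  mv_pow (rconst r) n = rconst (Rmax (INR n * r - (INR n - 1)) 0) /\
  rat01 (Rmax (INR n * r - (INR n - 1)) 0).
Proof.
  intros Hr. pose proof (rat01_range r Hr).
  induction n as [|n [IH1 IH2]]; simpl mv_pow.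
  - replace (Rmax (INR 0 * r - (INR 0 - 1)) 0) with 1 by (simpl; minmax_lra).
    split; [symmetry; apply rconst_1|apply rat01_1].
  - replace (Rmax (INR (S n) * r - (INR (S n) - 1)) 0)
      with (Rmax (r + Rmax (INR n * r - (INR n - 1)) 0 - 1) 0)
      by (pose proof (pos_INR n); rewrite S_INR; unfold Rmax; repeat destruct Rle_dec; nra).
    rewrite IH1, rconst_mult by auto. split; auto using rat01_mult.
Qed.

Lemma rconst_frac_succ j n : (0 < n)%nat -> (S j <= n)%nat ->
  rconst (INR (S j) / INR n) = rconst (INR j / INR n) ⊕ rconst (1 / INR n).
Proof.
  intros Hn Hj. assert (HnR : 0 < INR n) by (apply lt_0_INR; auto).
  assert (Hj' : INR (S j) <= INR n) by (apply le_INR; auto).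
  rewrite rconst_oplus by (apply (rat01_frac _ _ Hn) || apply (rat01_frac 1 _ Hn); lia).
  f_equal. rewrite S_INR in *. unfold Rmin. destruct Rle_dec as [h0|h0]; [field; lra|].
  exfalso. apply h0. apply Rmult_le_reg_r with (INR n); auto. field_simplify; lra.
Qed.

Section StdHomConstants.
Variable h : A -> R.
Hypothesis Hh : std_hom h.

Lemma std_hom_rconst_frac n j : (0 < n)%nat -> (j <= n)%nat ->
  h (rconst (INR j / INR n)) = Rmin (INR j * h (rconst (1 / INR n))) 1.
Proof.
  intros Hn. pose proof (std_hom_range h Hh (rconst (1 / INR n))).
  induction j; intros Hjn.
  - simpl. unfold Rdiv. rewrite Rmult_0_l, rconst_0, (std_hom_0 h Hh). minmax_lra.
  - rewrite rconst_frac_succ, (std_hom_oplus h Hh), IHj, S_INR by (auto; lia).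
    pose proof (pos_INR j). unfold Rmin; repeat destruct Rle_dec; nra.
Qed.

(* A homomorphism into [0,1] must send [rconst (1/n)] to [u] with [n u = 1]:
   [n] copies of it sum to [1] and [n - 1] copies sum to its negation. *)
Lemma std_hom_rconst r : rat01 r -> h (rconst r) = r.
Proof.
  intros Hr. destruct (rat01_frac_inv r Hr) as [k [n [Hn [Hk ->]]]].
  assert (HnR : 0 < INR n) by (apply lt_0_INR; auto).
  set (u := h (rconst (1 / INR n))).
  assert (Hu : 0 <= u <= 1) by apply (std_hom_range h Hh).
  assert (E1 : Rmin (INR n * u) 1 = 1).
  { unfold u. rewrite <- std_hom_rconst_frac by auto. replace (INR n / INR n) with 1 by (field; lra).
    rewrite rconst_1. apply (std_hom_1 h Hh). }
  assert (E2 : 1 - u = Rmin (INR (n - 1) * u) 1).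
  { unfold u. rewrite <- std_hom_rconst_frac, <- (std_hom_neg h Hh) by lia.
    rewrite rconst_neg by (apply (rat01_frac 1 _ Hn); lia). do 2 f_equal.
    rewrite minus_INR by lia. simpl. field. lra. }
  assert (Hu' : u = 1 / INR n).
  { rewrite minus_INR in E2 by lia. simpl in E2.
    assert (INR n * u = 1) by (unfold Rmin in *; repeat destruct Rle_dec; nra).
    apply Rmult_eq_reg_l with (INR n); [field_simplify|]; lra. }
  rewrite std_hom_rconst_frac by auto. fold u. rewrite Hu'.
  assert (INR k <= INR n) by (apply le_INR; auto).
  unfold Rmin. destruct Rle_dec as [h0|h0]; [field; lra|].
  exfalso. apply h0. apply Rmult_le_reg_r with (INR n); auto. field_simplify; lra.
Qed.

End StdHomConstants.
End PavelkaConstants.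

(** * Maximal filters and homomorphisms into [0,1] *)

(* For a maximal filter [F], the value [x/F] is the Dedekind cut of the rational
   constants below [x] in the total preorder [a <=_F b :<-> F (a -> b)]. *)
Section MaximalFilterValue.
Context {A : PavelkaAlgebra}.
Variable F : A -> Prop.
Hypothesis HF : maximal_filter F.
Let HFfil : is_filter F := proj1 (proj1 HF).
Let HFproper : ~ F mv_zero := proj2 (proj1 HF).

Definition fle (a b : A) := F (mv_impl a b).

Lemma fle_of_le a b : mv_le a b -> fle a b.
Proof. intros Hab. unfold fle. rewrite Hab. now apply filter_1. Qed.
Lemma fle_trans a b c : fle a b -> fle b c -> fle a c.
Proof.
  intros H1 H2. apply (filter_up F (mv_impl a b ⊙ mv_impl b c)); [exact HFfil| |].
  - now apply filter_mult.
  - apply mv_impl_trans.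
Qed.
Lemma fle_total a b : fle a b \/ fle b a.
Proof. apply maximal_filter_prime, HF. Qed.
Lemma fle_oplus_r a b c : fle a b -> fle (a ⊕ c) (b ⊕ c).
Proof. intros H. apply (filter_up F (mv_impl a b)); [exact HFfil|exact H|apply mv_impl_oplus]. Qed.
Lemma fle_oplus_l a b c : fle a b -> fle (c ⊕ a) (c ⊕ b).
Proof. intros H. rewrite (mv_comm c a), (mv_comm c b). now apply fle_oplus_r. Qed.
Lemma fle_oplus a b c d : fle a b -> fle c d -> fle (a ⊕ c) (b ⊕ d).
Proof. intros. eapply fle_trans; [apply fle_oplus_r|apply fle_oplus_l]; eauto. Qed.
Lemma fle_neg a b : fle a b -> fle (¬ b) (¬ a).
Proof. unfold fle. now rewrite mv_impl_contrapositive. Qed.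
Lemma fle_pow a b n : fle a b -> fle (mv_pow a n) (mv_pow b n).
Proof.
  intros H. apply (filter_up F (mv_pow (mv_impl a b) n)); [exact HFfil| |apply mv_impl_pow].
  now apply filter_pow.
Qed.

(* If [r > s], a high enough power of [rconst (1 - r + s)] is [0]. *)
Lemma fle_rconst r s : rat01 r -> rat01 s -> fle (rconst r) (rconst s) -> r <= s.
Proof.
  intros Hr Hs H. apply Rnot_lt_le. intros Hlt.
  unfold fle, mv_impl in H. rewrite rconst_neg, rconst_oplus in H by auto using rat01_neg.
  set (t := Rmin (1 - r + s) 1) in *.
  assert (Ht : rat01 t) by (apply rat01_oplus; auto using rat01_neg).
  assert (Htv : t = 1 - r + s) by (unfold t; apply rat01_range in Hr; apply rat01_range in Hs; minmax_lra).
  destruct (archimed (/ (1 - t))) as [Hm _].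
  assert (Hpos : 0 < / (1 - t)) by (apply Rinv_0_lt_compat; lra).
  set (m := Z.to_nat (up (/ (1 - t)))).
  assert (Em : INR m = IZR (up (/ (1 - t)))).
  { unfold m. rewrite INR_IZR_INZ, Z2Nat.id; auto. apply le_IZR. lra. }
  destruct (@rconst_pow A t m Ht) as [Ep _].
  replace (Rmax (INR m * t - (INR m - 1)) 0) with 0 in Ep.
  - rewrite rconst_0 in Ep. apply HFproper. rewrite <- Ep. now apply filter_pow.
  - assert (INR m * (1 - t) > 1).
    { rewrite Em. assert (/ (1 - t) * (1 - t) = 1) by (field; lra). nra. }
    unfold Rmax; destruct Rle_dec; nra.
Qed.

Definition lower_cut x r := rat01 r /\ fle (rconst r) x.
Definition upper_cut x r := rat01 r /\ fle x (rconst r).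

Lemma lower_upper_cut x s t : lower_cut x s -> upper_cut x t -> s <= t.
Proof. intros [H1 H2] [G1 G2]. apply fle_rconst; eauto using fle_trans. Qed.
Lemma lower_or_upper_cut x r : rat01 r -> lower_cut x r \/ upper_cut x r.
Proof. intros Hr. destruct (fle_total (rconst r) x); [left|right]; split; auto. Qed.
Lemma lower_cut_0 x : lower_cut x 0.
Proof. split; [apply rat01_0|]. rewrite rconst_0. apply fle_of_le, mv_0_le. Qed.
Lemma upper_cut_1 x : upper_cut x 1.
Proof. split; [apply rat01_1|]. rewrite rconst_1. apply fle_of_le, mv_le_1. Qed.

Definition cut_value x := epsilon (inhabits 0) (is_lub (lower_cut x)).

Lemma cut_value_lub x : is_lub (lower_cut x) (cut_value x).
Proof.
  unfold cut_value. apply epsilon_spec. destruct (completeness (lower_cut x)) as [m Hm].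
  - exists 1. intros r [Hr _]. apply rat01_range in Hr. lra.
  - exists 0. apply lower_cut_0.
  - now exists m.
Qed.
Lemma cut_value_ge x s : lower_cut x s -> s <= cut_value x.
Proof. intros H. now apply (cut_value_lub x). Qed.
Lemma cut_value_le x t : upper_cut x t -> cut_value x <= t.
Proof. intros H. apply (cut_value_lub x). intros s Hs. eapply lower_upper_cut; eauto. Qed.
Lemma cut_value_range x : 0 <= cut_value x <= 1.
Proof. split; [apply cut_value_ge, lower_cut_0|apply cut_value_le, upper_cut_1]. Qed.

Lemma cut_value_approx_lower x e : 0 < e -> exists s, lower_cut x s /\ cut_value x - e < s.
Proof.
  intros He. apply NNPP. intros Hn.
  assert (cut_value x <= cut_value x - e); [|lra].
  apply (cut_value_lub x). intros s Hs. apply Rnot_lt_le. intros h. eauto.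
Qed.
Lemma cut_value_approx_upper x e : 0 < e -> exists t, upper_cut x t /\ t < cut_value x + e.
Proof.
  intros He. pose proof (cut_value_range x).
  destruct (Req_dec (cut_value x) 1) as [E|E]; [exists 1; split; [apply upper_cut_1|lra]|].
  destruct (rat01_dense (cut_value x) (Rmin (cut_value x + e / 2) 1)) as [r [Hr [H1 H2]]];
    try minmax_lra.
  exists r. split; [|minmax_lra].
  destruct (lower_or_upper_cut x r Hr) as [h|h]; auto. apply cut_value_ge in h. lra.
Qed.
Lemma cut_value_unique x y :
  (forall s, lower_cut x s -> s <= y) -> (forall t, upper_cut x t -> y <= t) -> y = cut_value x.
Proof.
  intros H1 H2. destruct (Rtotal_order y (cut_value x)) as [h|[h|h]]; auto; exfalso.
  - destruct (cut_value_approx_lower x (cut_value x - y)) as [s [Hs Hs']]; [lra|].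
    apply H1 in Hs. lra.
  - destruct (cut_value_approx_upper x (y - cut_value x)) as [t [Ht Ht']]; [lra|].
    apply H2 in Ht. lra.
Qed.

Lemma cut_value_neg x : cut_value (¬ x) = 1 - cut_value x.
Proof.
  symmetry. apply cut_value_unique.
  - intros s [Hs Hp]. apply fle_neg in Hp. rewrite mv_negneg, rconst_neg in Hp by auto.
    assert (cut_value x <= 1 - s) by (apply cut_value_le; split; auto using rat01_neg). lra.
  - intros t [Ht Hp]. apply fle_neg in Hp. rewrite mv_negneg, rconst_neg in Hp by auto.
    assert (1 - t <= cut_value x) by (apply cut_value_ge; split; auto using rat01_neg). lra.
Qed.

Lemma cut_value_oplus x y : cut_value (x ⊕ y) = Rmin (cut_value x + cut_value y) 1.
Proof.
  pose proof (cut_value_range x); pose proof (cut_value_range y).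
  symmetry. apply cut_value_unique.
  - intros s [Hs Hp]. pose proof (rat01_range s Hs). apply Rnot_lt_le. intros Hlt.
    set (e := (s - cut_value x - cut_value y) / 2).
    destruct (cut_value_approx_upper x e) as [t1 [[Ht1 Hp1] Ht1']]; [unfold e; minmax_lra|].
    destruct (cut_value_approx_upper y e) as [t2 [[Ht2 Hp2] Ht2']]; [unfold e; minmax_lra|].
    assert (Hsum : fle (x ⊕ y) (rconst (Rmin (t1 + t2) 1)))
      by (rewrite <- rconst_oplus by auto; now apply fle_oplus).
    assert (s <= Rmin (t1 + t2) 1) by (apply fle_rconst; eauto using rat01_oplus, fle_trans).
    unfold e in *. minmax_lra.
  - intros t [Ht Hp]. pose proof (rat01_range t Ht). apply Rnot_lt_le. intros Hlt.
    set (e := (Rmin (cut_value x + cut_value y) 1 - t) / 2).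
    destruct (cut_value_approx_lower x e) as [s1 [[Hs1 Hp1] Hs1']]; [unfold e; lra|].
    destruct (cut_value_approx_lower y e) as [s2 [[Hs2 Hp2] Hs2']]; [unfold e; lra|].
    assert (Hsum : fle (rconst (Rmin (s1 + s2) 1)) (x ⊕ y))
      by (rewrite <- rconst_oplus by auto; now apply fle_oplus).
    assert (Rmin (s1 + s2) 1 <= t) by (apply fle_rconst; eauto using rat01_oplus, fle_trans).
    unfold e in *. minmax_lra.
Qed.

Lemma cut_value_0 : cut_value mv_zero = 0.
Proof.
  symmetry. apply cut_value_unique.
  - intros s [Hs Hp]. rewrite <- rconst_0 in Hp. apply fle_rconst in Hp; auto using rat01_0.
  - intros t [Ht _]. apply rat01_range in Ht. lra.
Qed.

(* If [x] is not in [F], some power [x^(n+1)] is [0] modulo [F]; a rational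
   [s > 1 - 1/(2(n+1))] below [x] would make [s^(n+1)] positive. *)
Lemma cut_value_kernel x : F x <-> cut_value x = 1.
Proof.
  split.
  - intros Hx. pose proof (cut_value_range x). enough (1 <= cut_value x) by lra.
    apply cut_value_ge. split; [apply rat01_1|]. unfold fle. now rewrite rconst_1, mv_impl_1_l.
  - intros E. apply NNPP. intros Hx.
    destruct (maximal_filter_outside F x HF Hx) as [f [[|n] [Hf Hfe]]].
    { simpl in Hfe. rewrite mv_mult_1_r in Hfe. subst. auto. }
    assert (Hw : fle (mv_pow x (S n)) mv_zero).
    { unfold fle. rewrite mv_impl_0_r. apply (filter_up F f); [exact HFfil|exact Hf|].
      rewrite <- (mv_zero_r (¬ _)). apply mv_residuation. rewrite Hfe. apply mv_le_refl. }
    set (N := INR (S n)).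
    assert (HN : 1 <= N) by (unfold N; rewrite S_INR; pose proof (pos_INR n); lra).
    destruct (cut_value_approx_lower x (1 / (2 * N))) as [s [[Hs Hp] Hs']];
      [apply Rdiv_lt_0_compat; lra|].
    apply (fle_pow _ _ (S n)) in Hp. destruct (@rconst_pow A s (S n) Hs) as [Ep Hv].
    rewrite Ep in Hp. pose proof (fle_trans _ _ _ Hp Hw) as Hc. rewrite <- rconst_0 in Hc.
    apply fle_rconst in Hc; auto using rat01_0.
    fold N in Hc. rewrite E in Hs'.
    assert (N * (1 / (2 * N)) = 1/2) by (field; lra).
    assert (N * s > N - 1/2) by nra.
    unfold Rmax in Hc; destruct Rle_dec in Hc; lra.
Qed.

Lemma maximal_filter_std_hom : exists h, std_hom_with_kernel F h.
Proof.
  exists cut_value.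
  repeat split; intros; auto using cut_value_oplus, cut_value_neg, cut_value_0;
    try apply cut_value_range; now apply cut_value_kernel.
Qed.

End MaximalFilterValue.

Lemma quot_val_spec {A : PavelkaAlgebra} (F : SpecM A) :
  std_hom_with_kernel (proj1_sig F) (quot_val F).
Proof. unfold quot_val. apply epsilon_spec, maximal_filter_std_hom, (proj2_sig F). Qed.

Lemma quot_val_hom {A : PavelkaAlgebra} (F : SpecM A) : std_hom (quot_val F).
Proof. eapply std_hom_with_kernel_hom, quot_val_spec. Qed.

Lemma quot_val_range {A : PavelkaAlgebra} (F : SpecM A) x : 0 <= quot_val F x <= 1.
Proof. apply (std_hom_range _ (quot_val_hom F)). Qed.

(** * Semisimplicity: comparison at the maximal filters *)

Section MVHom.
Context {A B : MVAlgebra}.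
Variable h : A -> B.
Hypothesis Hh : mv_hom A B h.

Lemma mv_hom_1 : h mv_one = mv_one.
Proof. destruct Hh as [_ [hN hZ]]. unfold mv_one. now rewrite hN, hZ. Qed.
Lemma mv_hom_mult x y : h (x ⊙ y) = h x ⊙ h y.
Proof. destruct Hh as [hO [hN _]]. unfold mv_mult. now rewrite hN, hO, !hN. Qed.
Lemma mv_hom_impl x y : h (mv_impl x y) = mv_impl (h x) (h y).
Proof. destruct Hh as [hO [hN _]]. unfold mv_impl. now rewrite hO, hN. Qed.
Lemma mv_hom_join x y : h (mv_join x y) = mv_join (h x) (h y).
Proof. destruct Hh as [hO [hN _]]. unfold mv_join. now rewrite hO, hN, hO, hN. Qed.

Lemma mv_hom_kernel_filter : is_filter (fun a => h a = mv_one).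
Proof.
  split; [|split].
  - apply mv_hom_1.
  - intros a b Ha Hb. now rewrite mv_hom_mult, Ha, Hb, mv_mult_1_r.
  - intros a b Ha Hab. apply mv_1_le. rewrite <- Ha. unfold mv_le in *.
    now rewrite <- mv_hom_impl, Hab, mv_hom_1.
Qed.

(* A proper filter [F'] above the kernel has an image filter in the simple
   algebra [B]; it cannot be all of [B], so it is [{1}], i.e. [F'] is the kernel. *)
Lemma mv_hom_kernel_maximal :
  mv_simple B -> (forall b : B, exists a, h a = b) -> maximal_filter (fun a => h a = mv_one).
Proof.
  intros [Hne Hsimple] Hsurj. destruct Hh as [_ [hN hZ]].
  split; [split; [apply mv_hom_kernel_filter|]|].
  { rewrite hZ. auto. }
  intros F' [HF' HF'p] Hsub a Ha.
  set (image := fun b : B => exists a', F' a' /\ h a' = b).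
  assert (Himage : is_filter image).
  { split; [|split].
    - exists mv_one. split; [now apply filter_1|apply mv_hom_1].
    - intros b1 b2 [a1 [H1 <-]] [a2 [H2 <-]]. exists (a1 ⊙ a2).
      split; [now apply filter_mult|apply mv_hom_mult].
    - intros b1 b2 [a1 [H1 <-]] Hb. destruct (Hsurj b2) as [a2 <-].
      exists (mv_join a1 a2). split; [eapply filter_up; eauto; apply mv_join_ub_l|].
      rewrite mv_hom_join. now apply mv_join_r. }
  destruct (Hsimple image Himage) as [Hone|Hall].
  - apply Hone. exists a. auto.
  - exfalso. destruct (Hall mv_zero) as [a' [Ha' E]]. apply HF'p.
    rewrite <- (mv_mult_neg_r a'). apply filter_mult; auto.
    apply Hsub. now rewrite hN, E.
Qed.

End MVHom.

Section Separation.
Context {A : PavelkaAlgebra}.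
Hypothesis HS : mv_semisimple A.

(* A point of the subdirect decomposition where [x -> y] is not [1] gives,
   through its kernel, a maximal filter [F] with [x/F > y/F]. *)
Lemma semisimple_le (x y : A) :
  (forall F : SpecM A, quot_val F x <= quot_val F y) -> mv_le x y.
Proof.
  intros Hxy. destruct HS as [I [B [h [Hsimp [Hhom [Hsurj Hinj]]]]]].
  apply NNPP. intros Hn.
  assert (Hi : exists i, h i (mv_impl x y) <> mv_one).
  { apply NNPP. intros Hc. apply Hn, Hinj. intros i. rewrite (mv_hom_1 _ (Hhom i)).
    apply NNPP. eauto. }
  destruct Hi as [i Hi].
  set (F := exist _ _ (mv_hom_kernel_maximal (h i) (Hhom i) (Hsimp i) (Hsurj i)) : SpecM A).
  destruct (quot_val_spec F) as [_ [_ [_ [_ Hker]]]].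
  apply Hi, (Hker (mv_impl x y)). rewrite (std_hom_impl _ (quot_val_hom F)).
  specialize (Hxy F). pose proof (quot_val_range F x); pose proof (quot_val_range F y).
  minmax_lra.
Qed.

Lemma semisimple_eq (x y : A) : (forall F : SpecM A, quot_val F x = quot_val F y) -> x = y.
Proof.
  intros H. apply mv_le_antisym; apply semisimple_le; intros F; rewrite H; lra.
Qed.

End Separation.

Lemma Rinf_is_inf (S : R -> Prop) :
  (exists x, S x) -> (exists m, forall x, S x -> m <= x) -> is_inf S (Rinf S).
Proof.
  intros [x0 Hx0] [m Hm]. unfold Rinf. apply epsilon_spec.
  destruct (completeness (fun y => S (- y))) as [L [HL1 HL2]].
  - exists (- m). intros y Hy. apply Hm in Hy. lra.
  - exists (- x0). now rewrite Ropp_involutive.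
  - exists (- L). split.
    + intros x Hx. assert (- x <= L) by (apply HL1; now rewrite Ropp_involutive). lra.
    + intros m' Hm'. assert (L <= - m'); [|lra].
      apply HL2. intros y Hy. apply Hm' in Hy. lra.
Qed.

Section FrameRelation.
Context {A : PavelkaAlgebra}.
Notation qv := quot_val.
Variable G : A -> A.

Lemma frame_rel_is_inf F F' :
  is_inf (fun v => exists a : A, v = std_impl (qv F' (G a)) (qv F a)) (frame_rel G F F').
Proof.
  apply Rinf_is_inf; [now exists (std_impl (qv F' (G mv_zero)) (qv F mv_zero)), mv_zero|].
  exists 0. intros v [a ->]. pose proof (quot_val_range F' (G a)); pose proof (quot_val_range F a).
  minmax_lra.
Qed.
Lemma frame_rel_le F F' a : frame_rel G F F' <= std_impl (qv F' (G a)) (qv F a).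
Proof. apply (frame_rel_is_inf F F'). eauto. Qed.
Lemma frame_rel_glb F F' m :
  (forall a, m <= std_impl (qv F' (G a)) (qv F a)) -> m <= frame_rel G F F'.
Proof. intros H. apply (frame_rel_is_inf F F'). intros v [a ->]. auto. Qed.
Lemma frame_rel_range F F' : 0 <= frame_rel G F F' <= 1.
Proof.
  split.
  - apply frame_rel_glb. intros a.
    pose proof (quot_val_range F' (G a)); pose proof (quot_val_range F a). minmax_lra.
  - eapply Rle_trans; [apply (frame_rel_le F F' mv_zero)|apply Rmin_r].
Qed.

Lemma quot_val_G_le F F' x : qv F' (G x) <= std_impl (frame_rel G F F') (qv F x).
Proof.
  pose proof (frame_rel_le F F' x). pose proof (frame_rel_range F F').
  pose proof (quot_val_range F' (G x)); pose proof (quot_val_range F x). minmax_lra.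
Qed.

End FrameRelation.

Lemma tense_sym {A : PavelkaAlgebra} (G H : A -> A) : tense A G H -> tense A H G.
Proof. intros [a [b [c [d [e f]]]]]. repeat split; auto. Qed.

Section TenseOperators.
Context {A : PavelkaAlgebra}.
Notation qv := quot_val.
Variables G H : A -> A.
Hypothesis HT : tense A G H.

Let HG_meet := proj1 HT.
Let HG_const := proj1 (proj2 (proj2 HT)).
Let HH_const := proj1 (proj2 (proj2 (proj2 HT))).
Let HHG := proj1 (proj2 (proj2 (proj2 (proj2 HT)))).
Let HGH := proj2 (proj2 (proj2 (proj2 (proj2 HT)))).

Lemma tense_G_mono x y : mv_le x y -> mv_le (G x) (G y).
Proof.
  intros Hxy. rewrite <- (mv_meet_l _ _ Hxy), HG_meet. apply mv_mult_impl_le.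
Qed.

Lemma tense_G_1 : G mv_one = mv_one.
Proof.
  pose proof (HG_const 0%Q mv_one unitQ_0) as E. rewrite pv_const0 in E.
  unfold mv_impl in E. fold (@mv_one A) in E. now rewrite !mv_oplus_1_l in E.
Qed.

Lemma tense_G_oplus_rconst a r : rat01 r -> G (a ⊕ rconst r) = G a ⊕ rconst r.
Proof.
  intros Hr. destruct (@rconst_spec A (1 - r) (rat01_neg r Hr)) as [q [Hq [_ Eq]]].
  pose proof (HG_const q a Hq) as E. rewrite <- Eq in E. unfold mv_impl in E.
  rewrite rconst_neg in E by auto using rat01_neg. replace (1 - (1 - r)) with r in E by ring.
  now rewrite (mv_comm a), (mv_comm (G a)).
Qed.

Lemma tense_le_G_dual_H x : mv_le x (G (¬ H (¬ x))).
Proof.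
  pose proof (mv_neg_le_contravar _ _ (HGH (¬ x))) as Hb. now rewrite !mv_negneg in Hb.
Qed.

Lemma tense_dual_H_mult_rconst r z : rat01 r ->
  ¬ H (¬ (rconst r ⊙ z)) = rconst r ⊙ ¬ H (¬ z).
Proof.
  intros Hr. destruct (@rconst_spec A r Hr) as [q [Hq [_ Eq]]].
  replace (¬ (rconst r ⊙ z)) with (mv_impl (rconst r) (¬ z)) by (unfold mv_mult, mv_impl; now rewrite mv_negneg).
  rewrite Eq, <- HH_const by auto. unfold mv_impl, mv_mult. now rewrite mv_negneg.
Qed.

(* [G] commutes with [rconst r ->], and its left adjoint [¬ H ¬] with [rconst r ⊙]. *)
Lemma tense_G_mult_rconst r a : rat01 r -> mv_le (rconst r ⊙ G a) (G (rconst r ⊙ a)).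
Proof.
  intros Hr. eapply mv_le_trans; [apply tense_le_G_dual_H|]. apply tense_G_mono.
  rewrite tense_dual_H_mult_rconst by auto. apply mv_mult_le_mono_l, HHG.
Qed.

Lemma frame_rel_dual F F' : frame_rel G F F' = frame_rel H F' F.
Proof.
  apply Rle_antisym.
  - apply frame_rel_glb. intros b. eapply Rle_trans; [apply (frame_rel_le G F F' (¬ H b))|].
    pose proof (std_hom_le _ (quot_val_hom F') _ _ (HGH b)) as Hb.
    rewrite (std_hom_neg _ (quot_val_hom F')) in Hb. rewrite (std_hom_neg _ (quot_val_hom F)).
    pose proof (quot_val_range F' (G (¬ H b))); pose proof (quot_val_range F (H b)).
    pose proof (quot_val_range F' b). minmax_lra.
  - apply frame_rel_glb. intros a. eapply Rle_trans; [apply (frame_rel_le H F' F (¬ G a))|].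
    pose proof (std_hom_le _ (quot_val_hom F) _ _ (HHG a)) as Ha.
    rewrite (std_hom_neg _ (quot_val_hom F)) in Ha. rewrite (std_hom_neg _ (quot_val_hom F')).
    pose proof (quot_val_range F (H (¬ G a))); pose proof (quot_val_range F' (G a)).
    pose proof (quot_val_range F a). minmax_lra.
Qed.

End TenseOperators.

(** * The existence lemma *)

Section BigOps.
Context {A : MVAlgebra}.

Definition mv_big_mult (l : list A) : A := fold_right mv_mult mv_one l.
Definition mv_big_meet (l : list A) : A := fold_right mv_meet mv_one l.

Lemma mv_big_mult_app l1 l2 : mv_big_mult (l1 ++ l2) = mv_big_mult l1 ⊙ mv_big_mult l2.
Proof.
  induction l1; simpl; [now rewrite mv_mult_1_l|now rewrite IHl1, mv_mult_assoc].
Qed.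

Variable h : A -> R.
Hypothesis Hh : std_hom h.

Lemma std_hom_big_mult_lt_1 l : h (mv_big_mult l) < 1 -> exists b, In b l /\ h b < 1.
Proof.
  induction l as [|b l IH]; simpl; intros Hl.
  - rewrite (std_hom_1 h Hh) in Hl. lra.
  - rewrite (std_hom_mult h Hh) in Hl. destruct (Rlt_dec (h b) 1) as [h1|h1]; eauto.
    destruct IH as [b' [H1 H2]]; eauto.
    pose proof (std_hom_range h Hh b); pose proof (std_hom_range h Hh (mv_big_mult l)). minmax_lra.
Qed.

Lemma std_hom_big_meet_le l b : In b l -> h (mv_big_meet l) <= h b.
Proof.
  induction l as [|b' l IH]; simpl; [contradiction|]. rewrite (std_hom_meet h Hh).
  intros [->|Hin]; [apply Rmin_l|eapply Rle_trans; [apply Rmin_r|auto]].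
Qed.

Lemma std_hom_big_meet_ge l v :
  v <= 1 -> (forall b, In b l -> v <= h b) -> v <= h (mv_big_meet l).
Proof.
  intros Hv. induction l as [|b l IH]; simpl; intros Hall.
  - now rewrite (std_hom_1 h Hh).
  - rewrite (std_hom_meet h Hh). apply Rmin_glb; auto.
Qed.

End BigOps.

Lemma tense_G_big_meet {A : PavelkaAlgebra} (G H : A -> A) (HT : tense A G H) l :
  G (mv_big_meet l) = mv_big_meet (map G l).
Proof.
  induction l as [|b l IH]; simpl; [apply (tense_G_1 G H HT)|]. now rewrite (proj1 HT), IH.
Qed.

Section ExistenceLemma.
Context {A : PavelkaAlgebra}.
Notation qv := quot_val.
Variables G H : A -> A.
Hypothesis HT : tense A G H.
Hypothesis HS : mv_semisimple A.
Variable F' : SpecM A.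
Variable x : A.
Variable d : R.
Hypothesis Hd : 0 < d.
Hypothesis Hgd : qv F' (G x) + d < 1.

Definition admissible (t : A * R * R) : Prop :=
  let '(a, p, q) := t in
  rat01 p /\ rat01 q /\ q + qv F' (G x) + d <= Rmin (qv F' (G a) + p) 1.
Definition witness_impl (t : A * R * R) : A :=
  let '(a, p, q) := t in mv_impl (x ⊕ rconst q) (a ⊕ rconst p).
Definition witness_meet (t : A * R * R) : A :=
  let '(a, p, q) := t in (a ⊕ rconst p) ⊙ rconst (1 - q).

Definition witness_base (z : A) : Prop :=
  exists l, Forall admissible l /\ mv_le (mv_big_mult (map witness_impl l)) z.

Lemma witness_base_filter : is_filter witness_base.
Proof.
  split; [|split].
  - exists nil. split; [constructor|apply mv_le_refl].
  - intros a b [l1 [C1 L1]] [l2 [C2 L2]]. exists (l1 ++ l2).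
    split; [now apply Forall_app|]. rewrite map_app, mv_big_mult_app. now apply mv_mult_le_mono.
  - intros a b [l1 [C1 L1]] Hab. exists l1. split; eauto using mv_le_trans.
Qed.

(* At every maximal filter one of the implications fails, and there
   [(a + p) (1 - q) <= x]. *)
Lemma witness_meet_le l : Forall admissible l ->
  mv_le (mv_big_mult (map witness_impl l)) mv_zero -> mv_le (mv_big_meet (map witness_meet l)) x.
Proof.
  intros Hl Hzero. apply semisimple_le; auto. intros F.
  pose proof (quot_val_hom F) as Hh.
  assert (Hlt : qv F (mv_big_mult (map witness_impl l)) < 1).
  { pose proof (std_hom_le _ Hh _ _ Hzero). rewrite (std_hom_0 _ Hh) in *. lra. }
  destruct (std_hom_big_mult_lt_1 _ Hh _ Hlt) as [b [Hin Hb]].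
  apply in_map_iff in Hin as [[[a p] q] [<- Hint]].
  rewrite Forall_forall in Hl. destruct (Hl _ Hint) as [Hp [Hq _]].
  eapply Rle_trans; [apply (std_hom_big_meet_le _ Hh), in_map, Hint|]. simpl in *.
  rewrite (std_hom_impl _ Hh), !(std_hom_oplus _ Hh) in Hb. std_hom_simpl (qv F) Hh.
  rewrite !(std_hom_rconst (qv F) Hh) in * by auto using rat01_neg.
  pose proof (quot_val_range F a); pose proof (quot_val_range F x).
  apply rat01_range in Hp; apply rat01_range in Hq. minmax_lra.
Qed.

Lemma G_witness_meet_ge l : Forall admissible l ->
  qv F' (G x) + d <= qv F' (G (mv_big_meet (map witness_meet l))).
Proof.
  intros Hl. pose proof (quot_val_hom F') as Hh.
  rewrite (tense_G_big_meet G H HT), map_map. apply (std_hom_big_meet_ge _ Hh); [lra|].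
  intros b Hin. apply in_map_iff in Hin as [[[a p] q] [<- Hint]].
  rewrite Forall_forall in Hl. destruct (Hl _ Hint) as [Hp [Hq Hbound]]. simpl.
  rewrite mv_mult_comm.
  eapply Rle_trans; [|apply (std_hom_le _ Hh), (tense_G_mult_rconst G H HT); auto using rat01_neg].
  rewrite (tense_G_oplus_rconst G H HT) by auto. std_hom_simpl (qv F') Hh.
  rewrite !(std_hom_rconst (qv F') Hh) by auto using rat01_neg.
  pose proof (quot_val_range F' (G a)).
  apply rat01_range in Hp; apply rat01_range in Hq. minmax_lra.
Qed.

Lemma witness_base_proper : proper_filter witness_base.
Proof.
  split; [apply witness_base_filter|]. intros [l [Hl Hzero]].
  pose proof (tense_G_mono G H HT _ _ (witness_meet_le l Hl Hzero)) as HG.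
  apply (std_hom_le _ (quot_val_hom F')) in HG.
  pose proof (G_witness_meet_ge l Hl). lra.
Qed.

Section AboveWitnessBase.
Variable F : SpecM A.
Hypothesis HF : subpred witness_base (proj1_sig F).

Lemma witness_value_le a p q : admissible (a, p, q) ->
  Rmin (qv F x + q) 1 <= Rmin (qv F a + p) 1.
Proof.
  intros Hadm. pose proof (quot_val_hom F) as Hh.
  destruct (quot_val_spec F) as [_ [_ [_ [_ Hker]]]].
  assert (Himpl : qv F (witness_impl (a, p, q)) = 1).
  { apply Hker, HF. exists ((a, p, q) :: nil). split; [now constructor|].
    simpl. rewrite mv_mult_1_r. apply mv_le_refl. }
  destruct Hadm as [Hp [Hq _]]. simpl in Himpl.
  rewrite (std_hom_impl _ Hh), !(std_hom_oplus _ Hh), !(std_hom_rconst _ Hh) in Himpl by auto.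
  pose proof (quot_val_range F a); pose proof (quot_val_range F x).
  apply rat01_range in Hp; apply rat01_range in Hq. minmax_lra.
Qed.

(* Choose a rational [q] (resp. [p]) just below the slack [G(a)/F' - G(x)/F' - d]
   (resp. just above its negative) to make [(a, 0, q)] (resp. [(a, p, 0)]) admissible. *)
Lemma witness_value_bound a :
  Rmin (qv F x + qv F' (G a) - qv F' (G x) - 2 * d) 1 <= qv F a.
Proof.
  pose proof (quot_val_range F' (G a)); pose proof (quot_val_range F a).
  pose proof (quot_val_range F x); pose proof (quot_val_range F' (G x)).
  set (beta := qv F' (G a) - qv F' (G x) - d).
  assert (Hbeta : beta = qv F' (G a) - qv F' (G x) - d) by reflexivity. clearbody beta.
  destruct (Rle_dec 0 beta) as [Hb|Hb].
  - destruct (rat01_dense (beta - d) beta) as [q [Hq [Hq1 Hq2]]]; [lra|lra|lra|].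
    assert (Hadm : admissible (a, 0, q)) by (repeat split; auto using rat01_0; minmax_lra).
    pose proof (witness_value_le _ _ _ Hadm). minmax_lra.
  - destruct (rat01_dense (- beta) (Rmin (- beta + d) 1)) as [p [Hp [Hp1 Hp2]]];
      try minmax_lra.
    assert (Hadm : admissible (a, p, 0)) by (repeat split; auto using rat01_0; minmax_lra).
    pose proof (witness_value_le _ _ _ Hadm). minmax_lra.
Qed.

Lemma frame_rel_witness_bound :
  std_impl (frame_rel G F F') (qv F x) <= qv F' (G x) + 2 * d.
Proof.
  pose proof (quot_val_range F x); pose proof (quot_val_range F' (G x)).
  assert (Hx : qv F x <= qv F' (G x) + 2 * d).
  { pose proof (witness_value_bound mv_zero).
    rewrite (std_hom_0 _ (quot_val_hom F)) in *.
    pose proof (quot_val_range F' (G mv_zero)). minmax_lra. }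
  assert (HR : Rmin (1 - qv F' (G x) - 2 * d + qv F x) 1 <= frame_rel G F F').
  { apply frame_rel_glb. intros a. pose proof (witness_value_bound a).
    pose proof (quot_val_range F' (G a)); pose proof (quot_val_range F a). minmax_lra. }
  pose proof (frame_rel_range G F F'). minmax_lra.
Qed.

End AboveWitnessBase.
End ExistenceLemma.

Lemma frame_rel_existence {A : PavelkaAlgebra} (G H : A -> A) (HT : tense A G H)
  (HS : mv_semisimple A) (F' : SpecM A) (x : A) (delta : R) : 0 < delta ->
  exists F : SpecM A,
    std_impl (frame_rel G F F') (quot_val F x) <= quot_val F' (G x) + delta.
Proof.
  intros Hdelta. pose proof (quot_val_range F' (G x)).
  destruct (Rle_dec 1 (quot_val F' (G x) + delta)) as [Hbig|Hsmall].
  { exists F'. pose proof (frame_rel_range G F' F'); pose proof (quot_val_range F' x). minmax_lra. }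
  assert (Hd : 0 < delta / 2) by lra.
  assert (Hgd : quot_val F' (G x) + delta / 2 < 1) by lra.
  destruct (maximal_filter_extension _ (witness_base_proper G H HT HS F' x _ Hd Hgd))
    as [M [HM Hincl]].
  exists (exist _ M HM). replace delta with (2 * (delta / 2)) by field.
  eapply frame_rel_witness_bound; eauto.
Qed.

Section FrameProperties.
Context {A : PavelkaAlgebra}.
Notation qv := quot_val.
Variables G H : A -> A.
Hypothesis HT : tense A G H.
Hypothesis HS : mv_semisimple A.

Lemma frame_rel_reflexive_iff : fz_reflexive (frame_rel G) <-> forall x : A, mv_le (G x) x.
Proof.
  split.
  - intros Hr x. apply semisimple_le; auto. intros F.
    pose proof (frame_rel_le G F F x) as Hle. rewrite Hr in Hle.
    pose proof (quot_val_range F (G x)); pose proof (quot_val_range F x). minmax_lra.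
  - intros Hle F. apply Rle_antisym; [apply frame_rel_range|]. apply frame_rel_glb. intros a.
    pose proof (std_hom_le _ (quot_val_hom F) _ _ (Hle a)).
    pose proof (quot_val_range F (G a)); pose proof (quot_val_range F a). minmax_lra.
Qed.

(* Two-step version of the existence lemma: [F -R-> F'' -R-> F'] with
   [x/F] close to [G(x)/F''] and [G(x)/F''] close to [G(G(x))/F']. *)
Lemma frame_rel_transitive_iff :
  fz_transitive (frame_rel G) <-> forall x : A, mv_le (G x) (G (G x)).
Proof.
  split.
  - intros Htr x. apply semisimple_le; auto. intros F'. apply Rle_plus_epsilon. intros e He.
    destruct (frame_rel_existence G H HT HS F' (G x) (e / 2)) as [F'' HF'']; [lra|].
    destruct (frame_rel_existence G H HT HS F'' x (e / 2)) as [F HF]; [lra|].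
    pose proof (quot_val_G_le G F F' x). pose proof (Htr F F'' F').
    pose proof (frame_rel_range G F F'); pose proof (frame_rel_range G F F'');
      pose proof (frame_rel_range G F'' F').
    pose proof (quot_val_range F x); pose proof (quot_val_range F'' (G x));
      pose proof (quot_val_range F' (G (G x))); pose proof (quot_val_range F' (G x)).
    minmax_lra.
  - intros HGG s t u. apply frame_rel_glb. intros a.
    pose proof (frame_rel_le G s t a); pose proof (frame_rel_le G t u (G a)).
    pose proof (std_hom_le _ (quot_val_hom u) _ _ (HGG a)).
    pose proof (frame_rel_range G s t); pose proof (frame_rel_range G t u).
    pose proof (quot_val_range t (G a)); pose proof (quot_val_range s a);
      pose proof (quot_val_range u (G a)); pose proof (quot_val_range u (G (G a))).
    minmax_lra.
Qed.

Lemma frame_rel_symmetric_iff : fz_symmetric (frame_rel G) <-> H = G.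
Proof.
  pose proof (tense_sym G H HT) as HT'.
  split.
  - intros Hsym. apply functional_extensionality. intros x. apply semisimple_eq; auto.
    intros F'. apply Rle_antisym; apply Rle_plus_epsilon; intros e He.
    + destruct (frame_rel_existence G H HT HS F' x e He) as [F HF].
      pose proof (quot_val_G_le H F F' x) as HH.
      rewrite (frame_rel_dual H G HT'), Hsym in HH. lra.
    + destruct (frame_rel_existence H G HT' HS F' x e He) as [F HF].
      pose proof (quot_val_G_le G F F' x) as HG.
      rewrite Hsym, (frame_rel_dual G H HT) in HG. lra.
  - intros E s t. now rewrite (frame_rel_dual G H HT), E.
Qed.

End FrameProperties.

Lemma fz_reflexive_dual {A : PavelkaAlgebra} (G H : A -> A) (HT : tense A G H) :
  fz_reflexive (frame_rel G) <-> fz_reflexive (frame_rel H).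
Proof.
  unfold fz_reflexive. split; intros Hr F; [rewrite <- (frame_rel_dual G H HT)|rewrite (frame_rel_dual G H HT)]; auto.
Qed.

Lemma fz_transitive_dual {A : PavelkaAlgebra} (G H : A -> A) (HT : tense A G H) :
  fz_transitive (frame_rel G) <-> fz_transitive (frame_rel H).
Proof.
  unfold fz_transitive, std_mult.
  split; intros Htr s t u; specialize (Htr u t s);
    [rewrite <- !(frame_rel_dual G H HT)|rewrite !(frame_rel_dual G H HT)]; now rewrite Rplus_comm.
Qed.

Theorem theorem13 (A : PavelkaAlgebra) (G H : A -> A)
  (HT : tense A G H) (HS : mv_semisimple A) :
  ((fz_reflexive (frame_rel G) <-> forall x : A, mv_le (G x) x) /\
   (fz_reflexive (frame_rel G) <-> forall x : A, mv_le (H x) x)) /\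
  (fz_symmetric (frame_rel G) <-> H = G) /\
  ((fz_transitive (frame_rel G) <-> forall x : A, mv_le (G x) (G (G x))) /\
   (fz_transitive (frame_rel G) <-> forall x : A, mv_le (H x) (H (H x)))).
Proof.
  pose proof (tense_sym G H HT) as HT'.
  split; [split|split; [|split]].
  - now apply frame_rel_reflexive_iff.
  - rewrite (fz_reflexive_dual G H HT). now apply frame_rel_reflexive_iff.
  - now apply frame_rel_symmetric_iff.
  - now apply frame_rel_transitive_iff with H.
  - rewrite (fz_transitive_dual G H HT). now apply frame_rel_transitive_iff with G.
Qed.
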